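(* Let $p\ge1$ be an integer. For every $\bm U^0\in\mathbb V_h$ the equation $(\bm I+\mathbb A^2)\frac{\bm U^1-\bm U^0}{\tau}+\mathbb D(\bm U^0)\frac{\bm U^1+\bm U^0}{2}=0$ has a unique solution $\bm U^1\in\mathbb V_h$, and for every $n\ge1$ and all given $\bm U^{n-1},\bm U^n\in\mathbb V_h$ the equation $(\bm I+\mathbb A^2)\frac{\bm U^{n+1}-\bm U^n}{\tau}+\mathbb D\big(\frac{3\bm U^n-\bm U^{n-1}}{2}\big)\frac{\bm U^{n+1}+\bm U^n}{2}=0$ has a unique solution $\bm U^{n+1}\in\mathbb V_h$. That is, the LCN-MP scheme is uniquely solvable.
   Context: $\Omega=[x_L,x_R]\times[y_L,y_R]$, $l_1=x_R-x_L$, $l_2=y_R-y_L$, $N_1,N_2$ even, $h_r=l_r/N_r$, grid points $x_{j_1}=x_L+j_1h_1$, $y_{j_2}=y_L+j_2h_2$, $0\le j_r\le N_r-1$; $\tau>0$. $\mathbb V_h$ is the space of doubly periodic grid functions identified with vectors $\bm U=(U_{0,0},U_{1,0},\dots,U_{N_1-1,0},U_{0,1},\dots,U_{N_1-1,N_2-1})^T$. For $r=1,2$, $\mu_r=2\pi/l_r$, $g^{(1)}_k(x)=\frac1{N_1}\sum_{l=-N_1/2}^{N_1/2}\frac1{a_l}e^{\mathrm il\mu_1(x-x_k)}$, $a_l=1$ for $|l|<N_1/2$, $a_{\pm N_1/2}=2$ (similarly $g^{(2)}_k(y)$). $\bm D_s^x=(\frac{d^s}{dx^s}g^{(1)}_k(x_j))_{j,k=0}^{N_1-1}$,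 $\bm D_s^y=(\frac{d^s}{dy^s}g^{(2)}_k(y_j))_{j,k=0}^{N_2-1}$. $\mathbb A=\bm I_{N_2}\otimes\bm D_2^x+\bm D_2^y\otimes\bm I_{N_1}$, $\mathbb B=\bm I_{N_2}\otimes\bm D_3^x+\bm D_2^y\otimes\bm D_1^x$, $\mathbb L_h=\bm I_{N_2}\otimes\bm D_1^x+\bm D_1^y\otimes\bm I_{N_1}$ ($\otimes$ Kronecker product), $\mathbb D(\bm W)=\mathbb B+\mathbb L_h+\frac1{p+2}(\mathrm{diag}(\bm W^p)\mathbb L_h+\mathbb L_h\mathrm{diag}(\bm W^p))$ with $\bm W^p$ the componentwise power. *)

From HB Require Import structures.
From mathcomp Require Import all_boot all_order all_algebra.
From mathcomp Require Import all_classical all_reals all_analysis.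
From mathcomp Require Import mxtens.
Set Implicit Arguments. Unset Strict Implicit. Unset Printing Implicit Defensive.
Import Order.TTheory GRing.Theory Num.Theory.
Local Open Scope ring_scope.

Section Fourier.
Variable R : realType.

(* a_l for l in {-N/2, ..., N/2}, encoded by the ordinal l' = l + N/2 < N+1 *)
Definition a_coef (N : nat) (l : 'I_N.+1) : R :=
  if (nat_of_ord l == 0%N) || (nat_of_ord l == N) then 2 else 1.

Definition freq (N : nat) (l : 'I_N.+1) : R := (l : nat)%:R - (N./2)%:R.

Definition mesh (a b : R) (N : nat) : R := (b - a) / N%:R.
Definition gridpt (a b : R) (N j : nat) : R := a + j%:R * mesh a b N.

(* Trigonometric Lagrange basis function
     g_k(x) = 1/N sum_{l=-N/2}^{N/2} (1/a_l) e^{i l mu (x - x_k)},  mu = 2 pi/(b-a).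
   Since a_{-l} = a_l the imaginary parts cancel, so g_k is the real function
   1/N sum_l (1/a_l) cos(l mu (x - x_k)). *)
Definition gbasis (a b : R) (N k : nat) : R -> R :=
  fun x => (N%:R)^-1 * \sum_(l < N.+1)
     (a_coef l)^-1 * cos (freq l * (2 * pi / (b - a)) * (x - gridpt a b N k)).

Definition Dmat (s : nat) (a b : R) (N : nat) : 'M[R]_N :=
  \matrix_(j < N, k < N) derive1n s (gbasis a b N k) (gridpt a b N j).

(* Vectors of V_h: index j2 * N1 + j1 (j1 runs fastest), i.e. 'cV_(N2 * N1);
   the Kronecker product  X (x) Y  is  tensmx X Y. *)
Definition Amat (xL xR yL yR : R) (N1 N2 : nat) : 'M[R]_(N2 * N1) :=
  tensmx (1%:M : 'M[R]_(N2)) (Dmat 2 xL xR N1) + tensmx (Dmat 2 yL yR N2) (1%:M : 'M[R]_(N1)).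

Definition Bmat (xL xR yL yR : R) (N1 N2 : nat) : 'M[R]_(N2 * N1) :=
  tensmx (1%:M : 'M[R]_(N2)) (Dmat 3 xL xR N1) + tensmx (Dmat 2 yL yR N2) (Dmat 1 xL xR N1).

Definition Lmat (xL xR yL yR : R) (N1 N2 : nat) : 'M[R]_(N2 * N1) :=
  tensmx (1%:M : 'M[R]_(N2)) (Dmat 1 xL xR N1) + tensmx (Dmat 1 yL yR N2) (1%:M : 'M[R]_(N1)).

Definition diagpow (n : nat) (W : 'cV[R]_n) (p : nat) : 'M[R]_n :=
  diag_mx (\row_i (W i 0) ^+ p).

Definition Dop (xL xR yL yR : R) (N1 N2 p : nat) (W : 'cV[R]_(N2 * N1))
  : 'M[R]_(N2 * N1) :=
  let L := Lmat xL xR yL yR N1 N2 in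
  Bmat xL xR yL yR N1 N2 + L
  + ((p.+2)%:R)^-1 *: (diagpow W p *m L + L *m diagpow W p).

End Fourier.
Arguments Dop {R} xL xR yL yR N1 N2 p W.

From HB Require Import structures.
From mathcomp Require Import all_boot all_order all_algebra.
From mathcomp Require Import all_classical all_reals all_analysis.
From mathcomp Require Import mxtens ring.
Set Implicit Arguments. Unset Strict Implicit. Unset Printing Implicit Defensive.
Import Order.TTheory GRing.Theory Num.Theory.
Local Open Scope ring_scope.

(* The entry (j, k) of D_s is a sum of terms c_l cos (l mu (x_j - x_k) + s pi/2),
   so D_s^T = (-1)^s D_s.  Hence A is symmetric while B, L_h and every D(W) are
   skew-symmetric.  Each step of the scheme is the linear system with matrix
   tau^-1 (I + A A^T) + D(W)/2, whose quadratic form at v is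
   tau^-1 (|v|^2 + |v A|^2) > 0 for v <> 0: the matrix is invertible. *)

Section CosineSums.
Variable R : realType.

Lemma is_derive_cos_affine (w b x : R) :
  is_derive x 1 (fun y => cos (w * y + b)) (w * cos (w * x + b + pi / 2)).
Proof.
have affine_derive : is_derive x 1 (fun y : R => w * y + b) w.
  by apply: is_derive_eq; rewrite addr0 -[RHS]mulr1.
have affine_derivable : derivable (fun y : R => w * y + b) x 1 by exact: ex_derive.
have cos_derivable : derivable (@cos R) (w * x + b) 1 by exact: derivable_cos.
have -> : (fun y => cos (w * y + b)) = cos \o (fun y : R => w * y + b) by [].
apply: DeriveDef.
  by apply/derivable1_diffP/differentiable_comp; apply/derivable1_diffP.
rewrite -derive1E derive1_comp // !derive1E !derive_val.
by rewrite cosDpihalf mulrC.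
Qed.

Lemma derive1_sum_cos_affine n (c w b : 'I_n -> R) :
  derive1 (fun x => \sum_(l < n) c l * cos (w l * x + b l))
  = fun x => \sum_(l < n) (c l * w l) * cos (w l * x + (b l + pi / 2)).
Proof.
apply/funext => x.
rewrite derive1E -(fct_sumE _ _ (fun l y => c l * cos (w l * y + b l))).
have term_derive l : is_derive x 1 (fun y => c l * cos (w l * y + b l))
    (c l * (w l * cos (w l * x + b l + pi / 2))).
  exact: (is_deriveZ (c l) (is_derive_cos_affine (w l) (b l) x)).
rewrite (@derive_val _ _ _ _ _ _ _ (is_derive_sum term_derive)).
by apply: eq_bigr => l _; rewrite mulrA addrA.
Qed.

Lemma derive1n_sum_cos_affine n (c w b : 'I_n -> R) s :
  derive1n s (fun x => \sum_(l < n) c l * cos (w l * x + b l))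
  = fun x => \sum_(l < n)
      (c l * w l ^+ s) * cos (w l * x + (b l + (pi / 2) *+ s)).
Proof.
elim: s => [|s IH].
  by apply/funext => x; apply: eq_bigr => l _; rewrite expr0 mulr1 mulr0n addr0.
rewrite derive1nS IH derive1_sum_cos_affine; apply/funext => x.
by apply: eq_bigr => l _; rewrite exprSr mulrA mulrSr; congr (_ * cos _); ring.
Qed.

Lemma cosN_add_halfpi (y : R) s :
  cos (- y + (pi / 2) *+ s) = (-1) ^+ s * cos (y + (pi / 2) *+ s).
Proof.
have shift : y + (pi / 2) *+ s = y - (pi / 2) *+ s + pi *+ s.
  by rewrite {3}(splitr pi) -mulr2n -mulrnA mulnC mulrnA mulr2n addrA subrK.
by rewrite shift (alternatingn (@cosDpi R)) signrMK -cosN opprD opprK.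
Qed.
End CosineSums.

Section SpectralMatrices.
Variable R : realType.

Lemma gbasisE (a b : R) N k :
  gbasis a b N k = fun x => \sum_(l < N.+1)
     (N%:R^-1 * (a_coef R l)^-1) * cos (freq R l * (2 * pi / (b - a)) * x
        + - (freq R l * (2 * pi / (b - a)) * gridpt a b N k)).
Proof.
apply/funext => x; rewrite /gbasis mulr_sumr.
by apply: eq_bigr => l _; rewrite mulrA mulrBr.
Qed.

Lemma DmatE s (a b : R) N j k :
  Dmat s a b N j k = \sum_(l < N.+1)
     (N%:R^-1 * (a_coef R l)^-1 * (freq R l * (2 * pi / (b - a))) ^+ s) *
     cos (freq R l * (2 * pi / (b - a)) * (gridpt a b N j - gridpt a b N k)
          + (pi / 2) *+ s).
Proof.
rewrite mxE gbasisE derive1n_sum_cos_affine.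
by apply: eq_bigr => l _; rewrite mulrBr addrA.
Qed.

Lemma trmx_Dmat s (a b : R) N : (Dmat s a b N)^T = (-1) ^+ s *: Dmat s a b N.
Proof.
apply/matrixP => j k; rewrite [LHS]mxE [RHS]mxE !DmatE mulr_sumr; apply: eq_bigr => l _.
by rewrite -[gridpt _ _ _ k - _]opprB mulrN cosN_add_halfpi mulrCA.
Qed.
End SpectralMatrices.
Section Kronecker.
Variable R : comPzRingType.

Lemma tensmxZl m n p q (a : R) (X : 'M[R]_(m, n)) (Y : 'M[R]_(p, q)) :
  (a *: X) *t Y = a *: (X *t Y).
Proof. by apply/matrixP => i j; rewrite !mxE mulrA. Qed.

Lemma tensmxZr m n p q (a : R) (X : 'M[R]_(m, n)) (Y : 'M[R]_(p, q)) :
  X *t (a *: Y) = a *: (X *t Y).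
Proof. by apply/matrixP => i j; rewrite !mxE mulrCA. Qed.
End Kronecker.

Section QuadraticForms.
Variable R : realFieldType.

Lemma mulmx_trmx_ge0 n (v : 'rV[R]_n) : 0 <= (v *m v^T) 0 0.
Proof. by rewrite mxE; apply: sumr_ge0 => i _; rewrite mxE -expr2 sqr_ge0. Qed.

Lemma mulmx_trmx_eq0 n (v : 'rV[R]_n) : (v *m v^T) 0 0 = 0 -> v = 0.
Proof.
rewrite mxE => /psumr_eq0P sq0; apply/rowP => i; rewrite mxE.
have /(_ i isT) : forall k, true -> v 0 k * v^T k 0 = 0.
  by apply: sq0 => k _; rewrite mxE -expr2 sqr_ge0.
by rewrite mxE -expr2 => /eqP; rewrite sqrf_eq0 => /eqP.
Qed.

Lemma skew_form_eq0 n (Q : 'M[R]_n) (v : 'rV[R]_n) :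
  Q^T = - Q -> (v *m Q *m v^T) 0 0 = 0.
Proof.
move=> skewQ; have : (v *m Q *m v^T)^T = - (v *m Q *m v^T).
  by rewrite !trmx_mul trmxK skewQ mulNmx mulmxN mulmxA.
move=> /(congr1 (fun M : 'M[R]_1 => M 0 0)) /=.
rewrite [X in X = _]mxE [X in _ = X]mxE => /eqP.
by rewrite eq_sym eqNr => /eqP.
Qed.

Lemma unitmx_add_skew n (A Q : 'M[R]_n) (t : R) :
  0 < t -> Q^T = - Q -> t *: (1%:M + A *m A^T) + Q \in unitmx.
Proof.
move=> t_gt0 skewQ; rewrite -row_free_unit; apply: inj_row_free => v vM0.
have : (v *m (t *: (1%:M + A *m A^T) + Q) *m v^T) 0 0 = 0.
  by rewrite vM0 mul0mx mxE.
rewrite mulmxDr mulmxDl mxE (skew_form_eq0 v skewQ) addr0 -scalemxAr -scalemxAl mxE.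
rewrite mulmxDr mulmx1 mulmxDl mxE mulmxA -[v *m A *m A^T *m v^T]mulmxA -trmx_mul.
move=> /eqP; rewrite mulf_eq0 gt_eqF //= paddr_eq0 ?mulmx_trmx_ge0 //.
by case/andP => /eqP /mulmx_trmx_eq0.
Qed.
End QuadraticForms.

Lemma exists_unique_midpoint_step (R : comUnitRingType) n (P Q : 'M[R]_n) (t h : R)
    (U0 : 'cV[R]_n) :
  t *: P + h *: Q \in unitmx ->
  exists! U1 : 'cV_n, P *m (t *: (U1 - U0)) + Q *m (h *: (U1 + U0)) = 0.
Proof.
move=> unitM; set M := t *: P + h *: Q; set r := t *: (P *m U0) - h *: (Q *m U0).
have stepE U1 : P *m (t *: (U1 - U0)) + Q *m (h *: (U1 + U0)) = M *m U1 - r.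
  rewrite scalerBr scalerDr mulmxBr mulmxDr -!scalemxAr mulmxDl -!scalemxAl.
  by rewrite /r opprB addrACA [- _ + _]addrC.
exists (invmx M *m r); split; first by rewrite stepE mulKVmx // subrr.
by move=> U1; rewrite stepE => /eqP; rewrite subr_eq0 => /eqP <-; rewrite mulKmx.
Qed.

Section LCNMatrices.
Variables (R : realType) (xL xR yL yR : R) (N1 N2 : nat).

Let A := Amat xL xR yL yR N1 N2.
Let L := Lmat xL xR yL yR N1 N2.
Let B := Bmat xL xR yL yR N1 N2.

Lemma trmx_Amat : A^T = A.
Proof.
rewrite /A /Amat linearD /= !trmx_tens !trmx1 !trmx_Dmat tensmxZl tensmxZr.
by rewrite sqrrN expr1n !scale1r.
Qed.

Lemma trmx_Lmat : L^T = - L.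
Proof.
rewrite /L /Lmat linearD /= !trmx_tens !trmx1 !trmx_Dmat tensmxZl tensmxZr.
by rewrite expr1 !scaleN1r opprD.
Qed.

Lemma trmx_Bmat : B^T = - B.
Proof.
rewrite /B /Bmat linearD /= !trmx_tens !trmx1 !trmx_Dmat tensmxZl !tensmxZr.
by rewrite expr1 scalerA -exprSr -scalerDr -signr_odd expr1 scaleN1r.
Qed.

Lemma trmx_Dop p W : (Dop xL xR yL yR N1 N2 p W)^T = - Dop xL xR yL yR N1 N2 p W.
Proof.
have symP : (diagpow W p)^T = diagpow W p by rewrite tr_diag_mx.
rewrite /Dop /= -/L -/B; move: trmx_Bmat trmx_Lmat; clearbody B L => skB skL.
rewrite !linearD !linearZ /= skB skL !trmx_mul symP skL mulmxN mulNmx.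
by congr (_ + _); rewrite addrC.
Qed.

Lemma unitmx_LCN_MP p (t h : R) W :
  0 < t -> t *: (1%:M + A *m A) + h *: Dop xL xR yL yR N1 N2 p W \in unitmx.
Proof.
move=> t_gt0; rewrite -{2}trmx_Amat; apply: unitmx_add_skew => //.
by rewrite linearZ /= trmx_Dop scalerN.
Qed.
End LCNMatrices.

(* Only the symmetry of A and the skew-symmetry of the D(W) matter. *)
Theorem theorem3p2 (R : realType) (xL xR yL yR tau : R) (N1 N2 p : nat) :
  xL < xR -> yL < yR -> 0 < tau ->
  (0 < N1)%N -> ~~ odd N1 -> (0 < N2)%N -> ~~ odd N2 -> (1 <= p)%N ->
  let A := Amat xL xR yL yR N1 N2 in
  let D := Dop xL xR yL yR N1 N2 p in
  (forall U0 : 'cV[R]_(N2 * N1),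
     exists! U1 : 'cV[R]_(N2 * N1),
       (1%:M + A *m A) *m (tau^-1 *: (U1 - U0))
       + D U0 *m (2^-1 *: (U1 + U0)) = 0)
  /\
  (forall n : nat, (1 <= n)%N ->
   forall Unm1 Un : 'cV[R]_(N2 * N1),
     exists! Unp1 : 'cV[R]_(N2 * N1),
       (1%:M + A *m A) *m (tau^-1 *: (Unp1 - Un))
       + D (2^-1 *: (3%:R *: Un - Unm1)) *m (2^-1 *: (Unp1 + Un)) = 0).
Proof.
move=> _ _ tau_gt0 _ _ _ _ _ A D.
have step_unit W : tau^-1 *: (1%:M + A *m A) + 2^-1 *: D W \in unitmx.
  by apply: unitmx_LCN_MP; rewrite invr_gt0.
split=> [U0 | n _ Unm1 Un]; exact: exists_unique_midpoint_step.
Qed.
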